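(* Let $\mathbf a=\{a_1,\dots,a_A\}$, $\mathbf c=\{c_1,\dots,c_C\}$, $d_1,d_2\in\mathbb C\setminus\{0\}$ with $d_2/d_1\notin\{q^m:m\in\mathbb Z\}$, $d_1\mathbf c$ and $d_2\mathbf c$ disjoint from $\Omega_q$, and generic so that all quantities below are defined, and let $s\in\mathbb C\setminus\{0\}$. Fix a square root $\sqrt{d_1/d_2}$ and put $\sqrt{d_2/d_1}:=1/\sqrt{d_1/d_2}$, $\sqrt{d_1d_2}:=d_1\sqrt{d_2/d_1}$. With $$H(\mathbf a,\mathbf c,\{d_1,d_2\};q):=\mathop{\mathrm{Sym}}_{d_1;d_2}\frac{(d_1\mathbf a;q)_\infty}{(d_2/d_1,d_1\mathbf c;q)_\infty}{}_{C}\phi_{A+1}^{\,C-A-2}\!\left(\begin{matrix}d_1\mathbf c\\ d_1\mathbf a,\ qd_1/d_2\end{matrix};q,q\right),$$ one has $$H(\mathbf a,\mathbf c,\{d_1,d_2\};q)=\frac{\sqrt{d_2/d_1}}{(1-q)s(q;q)_\infty\vartheta(d_2/d_1;q)}\int_{s\sqrt{d_2/d_1}}^{s\sqrt{d_1/d_2}}\frac{\big((q\sqrt{d_1/d_2},q\sqrt{d_2/d_1},\mathbf a\sqrt{d_1d_2})\tfrac us;q\big)_\infty}{\big(\mathbf c\sqrt{d_1d_2}\tfrac us;q\big)_\infty}\,d_qu,$$ and the right-hand side is symmetric under interchanging $d_1$ and $d_2$.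
   Context: $q\in\mathbb C$, $0<|q|<1$; $q$-shifted factorials $(a;q)_n$, $(a;q)_\infty$, products of several; a list as entry stands for all its elements, $x\mathbf a=\{xa_i\}$, $(\mathbf u y;q)_\infty=\prod_i(u_iy;q)_\infty$. $\Omega_q=\{q^{-k}:k\in\mathbb N_0\}$. $\vartheta(x;q)=(x,q/x;q)_\infty$. $\mathop{\mathrm{Sym}}_{d_1;d_2}F(d_1,d_2)=F(d_1,d_2)+F(d_2,d_1)$. Basic hypergeometric series ${}_{r+1}\phi_s=\sum_{k\ge0}\frac{(a_1,\dots,a_{r+1};q)_k}{(q,b_1,\dots,b_s;q)_k}((-1)^kq^{\binom k2})^{s-r}z^k$; ${}_{r+1}\phi_s^{\,-p}$ ($p\in\mathbb N_0$) adds $p$ numerator parameters $0$, ${}_{r+1}\phi_s^{\,p}$ adds $p$ denominator parameters $0$. Jackson $q$-integral: $\int_\alpha^\beta g(u)\,d_qu=(1-q)\beta\sum_{n\ge0}q^ng(q^n\beta)-(1-q)\alpha\sum_{n\ge0}q^ng(q^n\alpha)$. *)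

From Stdlib Require Import Reals ZArith List.
From Coquelicot Require Import Coquelicot.
Import ListNotations.
Open Scope C_scope.

(* limit of a C-valued sequence (total operator; meaningful when it converges) *)
Definition seq_lim (u : nat -> C) : C :=
  @lim C_CompleteNormedModule (filtermap u eventually).

Fixpoint psum (f : nat -> C) (n : nat) : C :=
  match n with O => 0 | S m => psum f m + f m end.

Definition series (f : nat -> C) : C := seq_lim (psum f).

Fixpoint qpoch (a q : C) (n : nat) : C :=
  match n with O => 1 | S m => qpoch a q m * (1 - a * q ^ m) end.

Definition qpoch_inf (a q : C) : C := seq_lim (qpoch a q).

Definition qpochs (l : list C) (q : C) (n : nat) : C :=
  fold_right (fun x acc => qpoch x q n * acc) 1 l.
Definition qpochs_inf (l : list C) (q : C) : C :=
  fold_right (fun x acc => qpoch_inf x q * acc) 1 l.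

Definition zpow (x : C) (m : Z) : C :=
  match m with
  | Z0 => 1
  | Zpos p => x ^ Pos.to_nat p
  | Zneg p => / (x ^ Pos.to_nat p)
  end.

Definition in_Omega (q x : C) : Prop := exists k : nat, x = / (q ^ k).

Definition qtheta (x q : C) : C := qpoch_inf x q * qpoch_inf (q / x) q.

(* basic hypergeometric series r+1 phi s with superscript e (an integer):
   superscript p >= 0 adds p zero denominator parameters, superscript -p adds
   p zero numerator parameters.  With r+1 = size nums and s = size dens
   (before adding zeros), the exponent s' - r' of ((-1)^k q^(k choose 2))
   equals  size dens - size nums + 1 + e. *)
Definition phi_gen (nums dens : list C) (e : Z) (q z : C) : C :=
  let ex := (Z.of_nat (length dens) - Z.of_nat (length nums) + 1 + e)%Z in
  series (fun k =>
    qpochs nums q k / (qpoch q q k * qpochs dens q k)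
    * zpow ((-1) ^ k * q ^ (Nat.div (k * (k - 1)) 2)) ex * z ^ k).

Definition jackson (q : C) (g : C -> C) (alpha beta : C) : C :=
  (1 - q) * beta * series (fun n => q ^ n * g (q ^ n * beta))
  - (1 - q) * alpha * series (fun n => q ^ n * g (q ^ n * alpha)).

Definition H_term (a c : list C) (d1 d2 q : C) : C :=
  qpochs_inf (map (fun x => d1 * x) a) q
  / (qpoch_inf (d2 / d1) q * qpochs_inf (map (fun x => d1 * x) c) q)
  * phi_gen (map (fun x => d1 * x) c)
            (map (fun x => d1 * x) a ++ [q * d1 / d2])
            (Z.of_nat (length c) - Z.of_nat (length a) - 2)%Z q q.

Definition H (a c : list C) (d1 d2 q : C) : C :=
  H_term a c d1 d2 q + H_term a c d2 d1 q.

(* right-hand side, with r the fixed square root of d1/d2: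
   sqrt(d1/d2) = r, sqrt(d2/d1) = 1/r, sqrt(d1 d2) = d1 * (1/r) *)
Definition RHS (a c : list C) (d1 d2 r s q : C) : C :=
  let r' := / r in
  let sq := d1 * r' in
  r' / ((1 - q) * s * qpoch_inf q q * qtheta (d2 / d1) q)
  * jackson q
      (fun u => qpochs_inf (map (fun x => x * (u / s))
                                ([q * r; q * r'] ++ map (fun x => x * sq) a)) q
                / qpochs_inf (map (fun x => x * sq * (u / s)) c) q)
      (s * r') (s * r).

From Stdlib Require Import Reals ZArith List Lra Lia FunctionalExtensionality.
From Coquelicot Require Import Coquelicot.
Open Scope C_scope.

(* At the Jackson nodes u = q^n s sqrt(d1/d2) the integrand is a
   quotient of infinite products (D q^n; q)_oo / (Dc q^n; q)_oo, and the
   shift rule (y q^n; q)_oo = (y; q)_oo / (y; q)_n turns the Jackson sum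
   toward that endpoint into (D; q)_oo/(Dc; q)_oo times the series
   sum_n (Dc; q)_n/(D; q)_n q^n, which is exactly the d1-half of H (the
   superscript C-A-2 of the phi-series cancels its balancing factor).  The
   other endpoint gives the d2-half, and theta(d2/d1) = (d2/d1, q d1/d2; q)_oo
   matches the prefactors.  Since H is symmetric in d1, d2, so is the
   right-hand side. *)

Definition converges_to (u : nat -> C) (l : C) : Prop :=
  filterlim u eventually (locally l).

Lemma seq_lim_correct (u : nat -> C) (l : C) : converges_to u l -> seq_lim u = l.
Proof.
  intros Hul. unfold seq_lim.
  set (F := filtermap u eventually).
  assert (PF : ProperFilter F) by apply filtermap_proper_filter, eventually_filter.
  apply (@is_filter_lim_unique C_AbsRing C_NormedModule F).
  - apply Proper_StrongProper; exact PF.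
  - intros P [eps Heps].
    assert (Hcauchy : cauchy F) by (intros e; exists l; apply Hul, locally_ball).
    eapply filter_imp; [|exact (@complete_cauchy C_CompleteNormedModule F PF Hcauchy eps)].
    intros x Hx. apply Heps, Hx.
  - exact Hul.
Qed.

Lemma converges_to_ext (u v : nat -> C) (l : C) :
  (forall n, u n = v n) -> converges_to u l -> converges_to v l.
Proof. intros E. apply filterlim_ext, E. Qed.

Lemma converges_to_scal (u : nat -> C) (l K : C) :
  converges_to u l -> converges_to (fun n => K * u n) (K * l).
Proof.
  intros Hul. eapply filterlim_comp; [exact Hul|].
  exact (@filterlim_scal_r C_AbsRing C_NormedModule K l).
Qed.

Lemma converges_to_shift (u : nat -> C) (l : C) (k : nat) :
  converges_to u l <-> converges_to (fun n => u (k + n)%nat) l.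
Proof.
  split; intros Hul P HP; destruct (Hul P HP) as [N HN].
  - exists N. intros n Hn. apply HN. lia.
  - exists (k + N)%nat. intros n Hn. replace n with (k + (n - k))%nat by lia. apply HN. lia.
Qed.

Lemma converges_to_norm_lower (u : nat -> C) (l : C) (d : R) :
  converges_to u l -> (forall n, d <= Cmod (u n))%R -> (d <= Cmod l)%R.
Proof.
  intros Hul Hd.
  assert (PF : ProperFilter' (@eventually)) by apply Proper_StrongProper, eventually_filter.
  apply (@closed_filterlim nat C_UniformSpace eventually PF u (fun z => d <= Cmod z)%R l Hul Hd).
  apply (closed_comp (U := R_UniformSpace) Cmod (fun t => d <= t)%R).
  - intros x. apply (@filterlim_norm C_AbsRing C_NormedModule).
  - apply closed_ge.
Qed.

Lemma psum_sum_n (f : nat -> C) (n : nat) : psum f (S n) = sum_n f n.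
Proof.
  induction n as [|n IH].
  - rewrite sum_O. simpl. ring.
  - rewrite sum_Sn, <- IH. reflexivity.
Qed.

Lemma psum_converges_geometric (f : nat -> C) (B rho : R) :
  (0 <= rho < 1)%R -> (forall n, Cmod (f n) <= B * rho ^ n)%R ->
  exists l, converges_to (psum f) l.
Proof.
  intros Hrho Hf.
  assert (Hgeom : @ex_series R_AbsRing R_NormedModule (fun n => B * rho ^ n)%R).
  { apply (@ex_series_scal_l R_AbsRing R_NormedModule B (fun n => rho ^ n)%R), ex_series_geom.
    rewrite Rabs_right; lra. }
  destruct (@ex_series_le C_AbsRing C_CompleteNormedModule f _ Hf Hgeom) as [l Hl].
  exists l. apply (converges_to_shift _ _ 1).
  apply (converges_to_ext (sum_n f)); [intros n; symmetry; apply psum_sum_n | exact Hl].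
Qed.

Lemma psum_telescope (u : nat -> C) (n : nat) :
  u n = u O + psum (fun k => u (S k) - u k) n.
Proof. induction n as [|n IH]; simpl; [ring | rewrite IH at 1; ring]. Qed.

Lemma converges_geometric_increments (u : nat -> C) (B rho : R) :
  (0 <= rho < 1)%R -> (forall n, Cmod (u (S n) - u n) <= B * rho ^ n)%R ->
  exists l, converges_to u l.
Proof.
  intros Hrho Hu.
  destruct (psum_converges_geometric _ B rho Hrho Hu) as [l Hl].
  exists (u O + l).
  apply (converges_to_ext (fun n => u O + psum (fun k => u (S k) - u k) n));
    [intros n; symmetry; apply psum_telescope|].
  eapply filterlim_comp_2; [apply filterlim_const | exact Hl |].
  exact (@filterlim_plus C_AbsRing C_NormedModule (u O) l).
Qed.

Lemma psum_scal (f : nat -> C) (K : C) (n : nat) :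
  psum (fun k => K * f k) n = K * psum f n.
Proof. induction n as [|n IH]; simpl; [ring | rewrite IH; ring]. Qed.

(* constants may be pulled out of a convergent series (the hypothesis is
   needed because [series] is defined by a choice-based limit operator) *)
Lemma series_scal (f : nat -> C) (K l : C) :
  converges_to (psum f) l -> series (fun k => K * f k) = K * series f.
Proof.
  intros Hf. unfold series. rewrite (seq_lim_correct _ _ Hf).
  apply seq_lim_correct.
  apply (converges_to_ext (fun n => K * psum f n)); [intros n; symmetry; apply psum_scal|].
  apply converges_to_scal, Hf.
Qed.

Lemma series_ext (f g : nat -> C) : (forall n, f n = g n) -> series f = series g.
Proof. intros E. f_equal. apply functional_extensionality, E. Qed.

Lemma exp_neg_le_one_minus (t : R) : (0 <= t <= 1 / 2 -> exp (- (2 * t)) <= 1 - t)%R.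
Proof.
  intros Ht. pose proof (exp_ineq1_le (2 * t)) as E.
  pose proof (exp_pos (2 * t)) as P.
  rewrite exp_Ropp. apply (Rmult_le_reg_r (exp (2 * t))); [exact P|].
  rewrite Rinv_l by lra. nra.
Qed.

Lemma eventual_lower_bound (f : nat -> R) (d : R) (M : nat) :
  (forall n, 0 < f n)%R -> (0 < d)%R -> (forall n, (M <= n)%nat -> d <= f n)%R ->
  exists d', (0 < d')%R /\ forall n, (d' <= f n)%R.
Proof.
  intros Hpos. revert d. induction M as [|M IH]; intros d Hd Hge.
  - exists d. split; [exact Hd | intros n; apply Hge; lia].
  - apply (IH (Rmin d (f M))); [apply Rmin_pos; auto|].
    intros n Hn. destruct (Nat.eq_dec n M) as [->|Hne]; [apply Rmin_r|].
    eapply Rle_trans; [apply Rmin_l | apply Hge; lia].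
Qed.

Lemma exp_le_compat (x y : R) : (x <= y -> exp x <= exp y)%R.
Proof.
  intros Hxy. destruct (Rle_lt_or_eq_dec _ _ Hxy) as [Hlt | ->];
    [left; apply exp_increasing, Hlt | lra].
Qed.

(* nonvanishing q y: no factor 1 - y q^m vanishes, i.e. y is not in Omega_q *)
Definition nonvanishing (q y : C) : Prop := forall m : nat, 1 - y * q ^ m <> 0.

Lemma qpoch_split (y q : C) (n m : nat) :
  qpoch y q (n + m) = qpoch y q n * qpoch (y * q ^ n) q m.
Proof.
  induction m as [|m IH]; simpl.
  - rewrite Nat.add_0_r. ring.
  - rewrite Nat.add_succ_r. simpl. rewrite IH, Cpow_add_r. ring.
Qed.

Lemma qpoch_nz (y q : C) (n : nat) : nonvanishing q y -> qpoch y q n <> 0.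
Proof.
  intros Hy. induction n as [|n IH]; simpl; [exact C1_nz | apply Cmult_neq_0; auto].
Qed.

Lemma qpochs_nil (q : C) (n : nat) : qpochs nil q n = 1.
Proof. reflexivity. Qed.

Lemma qpochs_cons (x : C) (l : list C) (q : C) (n : nat) :
  qpochs (x :: l) q n = qpoch x q n * qpochs l q n.
Proof. reflexivity. Qed.

Lemma qpochs_app (l1 l2 : list C) (q : C) (n : nat) :
  qpochs (l1 ++ l2) q n = qpochs l1 q n * qpochs l2 q n.
Proof. induction l1 as [|x l1 IH]; simpl app; rewrite ?qpochs_cons, ?IH, ?qpochs_nil; ring. Qed.

Lemma qpochs_inf_nil (q : C) : qpochs_inf nil q = 1.
Proof. reflexivity. Qed.

Lemma qpochs_inf_cons (x : C) (l : list C) (q : C) :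
  qpochs_inf (x :: l) q = qpoch_inf x q * qpochs_inf l q.
Proof. reflexivity. Qed.

(* Analytic facts about q-shifted factorials for a fixed |q| < 1. *)
Section QPochhammer.
Variable q : C.
Hypothesis Hq : (Cmod q < 1)%R.

Let rho := Cmod q.
(* geom n = 1 + rho + ... + rho^(n-1), which is at most 1/(1 - rho) *)
Let geom (n : nat) : R := ((1 - rho ^ n) / (1 - rho))%R.

Lemma rho_bounds : (0 <= rho < 1)%R.
Proof. split; [apply Cmod_ge_0 | exact Hq]. Qed.

Lemma rho_pow_le_1 (n : nat) : (0 <= rho ^ n <= 1)%R.
Proof.
  pose proof rho_bounds as Hr. split; [apply pow_le; lra|].
  rewrite <- (pow1 n). apply pow_incr. lra.
Qed.

Lemma geom_S (n : nat) : geom (S n) = (geom n + rho ^ n)%R.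
Proof. pose proof rho_bounds. unfold geom. simpl. field. lra. Qed.

Lemma geom_0 : geom 0 = 0%R.
Proof. unfold geom. simpl. unfold Rdiv. ring. Qed.

Lemma scaled_geom_bounds (x : R) (n : nat) : (0 <= x)%R ->
  (0 <= x * geom n <= x / (1 - rho))%R.
Proof.
  intros Hx. pose proof rho_bounds. pose proof (rho_pow_le_1 n).
  assert (Hinv : (0 < / (1 - rho))%R) by (apply Rinv_0_lt_compat; lra).
  unfold geom, Rdiv. split.
  - apply Rmult_le_pos; [|apply Rmult_le_pos]; lra.
  - rewrite <- Rmult_assoc. apply Rmult_le_compat_r; [lra|]. nra.
Qed.

Lemma Cmod_scaled_pow (y : C) (n : nat) : Cmod (y * q ^ n) = (Cmod y * rho ^ n)%R.
Proof. rewrite Cmod_mult, Cmod_pow. reflexivity. Qed.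

(* |(y;q)_n| <= exp(|y| geom n) <= exp(|y|/(1 - rho)), using |1 - z| <= exp |z| *)
Lemma qpoch_upper_bound (y : C) : exists B, forall n, (Cmod (qpoch y q n) <= B)%R.
Proof.
  pose proof (Cmod_ge_0 y) as Hy.
  assert (Hn : forall n, (Cmod (qpoch y q n) <= exp (Cmod y * geom n))%R).
  { induction n as [|n IH]; simpl.
    - rewrite geom_0, Cmod_1, Rmult_0_r, exp_0. lra.
    - rewrite Cmod_mult, geom_S, Rmult_plus_distr_l, exp_plus.
      apply Rmult_le_compat; auto using Cmod_ge_0.
      eapply Rle_trans; [|apply exp_ineq1_le]. rewrite <- Cmod_scaled_pow.
      unfold Cminus. eapply Rle_trans; [apply Cmod_triangle|].
      rewrite Cmod_1, Cmod_opp. lra. }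
  exists (exp (Cmod y / (1 - rho))). intros n. eapply Rle_trans; [apply Hn|].
  apply exp_le_compat, scaled_geom_bounds, Hy.
Qed.

(* a factor with |z| <= 1/2 satisfies |1 - z| >= exp(-2|z|), so the tail of
   the product starting where |y q^n| <= 1/2 stays away from zero *)
Lemma qpoch_lower_bound_small (y : C) : (Cmod y <= 1 / 2)%R ->
  forall n, (exp (- (2 * Cmod y / (1 - rho))) <= Cmod (qpoch y q n))%R.
Proof.
  intros Hy. pose proof rho_bounds as Hr.
  assert (Hn : forall n, (exp (- (2 * (Cmod y * geom n))) <= Cmod (qpoch y q n))%R).
  { induction n as [|n IH]; simpl.
    - rewrite geom_0, Cmod_1, Rmult_0_r, Rmult_0_r, Ropp_0, exp_0. lra.
    - rewrite Cmod_mult, geom_S, Rmult_plus_distr_l, Rmult_plus_distr_l, Ropp_plus_distr, exp_plus.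
      apply Rmult_le_compat; try (left; apply exp_pos); [exact IH|].
      assert (Hsmall : (0 <= Cmod y * rho ^ n <= 1 / 2)%R).
      { pose proof (rho_pow_le_1 n). pose proof (Cmod_ge_0 y). split; nra. }
      eapply Rle_trans; [apply exp_neg_le_one_minus, Hsmall|].
      rewrite <- Cmod_scaled_pow. pose proof (Cmod_triangle (1 - y * q ^ n) (y * q ^ n)) as T.
      replace (1 - y * q ^ n + y * q ^ n) with (RtoC 1) in T by ring. rewrite Cmod_1 in T. lra. }
  intros n. eapply Rle_trans; [|apply Hn]. apply exp_le_compat.
  pose proof (scaled_geom_bounds (Cmod y) n (Cmod_ge_0 y)). unfold Rdiv in *. lra.
Qed.

(* if no factor vanishes, |(y;q)_n| is bounded below by a positive constant:
   split off a head of length M after which |y q^M| <= 1/2 *)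
Lemma qpoch_lower_bound (y : C) : nonvanishing q y ->
  exists d, (0 < d)%R /\ forall n, (d <= Cmod (qpoch y q n))%R.
Proof.
  intros Hy. pose proof rho_bounds as Hr. pose proof (Cmod_ge_0 y).
  assert (Habs : (Rabs rho < 1)%R) by (rewrite Rabs_right; lra).
  destruct (pow_lt_1_zero rho Habs (/ (2 * (Cmod y + 1)))) as [M HM];
    [apply Rinv_0_lt_compat; lra|].
  assert (Hsmall : (Cmod (y * q ^ M) <= 1 / 2)%R).
  { specialize (HM M (le_n M)). rewrite Rabs_right in HM by (apply Rle_ge, pow_le; lra).
    apply (Rmult_lt_compat_r (2 * (Cmod y + 1))) in HM; [|lra].
    rewrite Rinv_l in HM by lra. rewrite Cmod_scaled_pow.
    pose proof (rho_pow_le_1 M). nra. }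
  set (head := Cmod (qpoch y q M)).
  assert (Hhead : (0 < head)%R) by apply Cmod_gt_0, qpoch_nz, Hy.
  apply (eventual_lower_bound (fun n => Cmod (qpoch y q n))
           (head * exp (- (2 * Cmod (y * q ^ M) / (1 - rho)))) M).
  - intros n. apply Cmod_gt_0, qpoch_nz, Hy.
  - apply Rmult_lt_0_compat; [exact Hhead | apply exp_pos].
  - intros n Hn. replace n with (M + (n - M))%nat by lia.
    rewrite qpoch_split, (Cmod_mult (qpoch y q M)). apply Rmult_le_compat_l; [apply Rlt_le, Hhead|].
    apply qpoch_lower_bound_small, Hsmall.
Qed.

(* (q;q)_n never vanishes since |q^(m+1)| < 1 *)
Lemma nonvanishing_q : nonvanishing q q.
Proof.
  intros m E. pose proof rho_bounds as Hr.
  assert (Hpow : Cmod (q * q ^ m) = 1%R).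
  { replace (q * q ^ m) with (1 - (1 - q * q ^ m)) by ring. rewrite E.
    replace (1 - 0) with (RtoC 1) by ring. apply Cmod_1. }
  rewrite Cmod_scaled_pow in Hpow. fold rho in Hpow.
  pose proof (rho_pow_le_1 m). nra.
Qed.

(* (y;q)_n converges: its increments are O(rho^n) *)
Lemma qpoch_converges (y : C) : exists L, converges_to (qpoch y q) L.
Proof.
  destruct (qpoch_upper_bound y) as [B HB].
  apply (converges_geometric_increments _ (B * Cmod y) rho rho_bounds).
  intros n. simpl.
  replace (qpoch y q n * (1 - y * q ^ n) - qpoch y q n)
    with (- (qpoch y q n * (y * q ^ n))) by ring.
  rewrite Cmod_opp, Cmod_mult, Cmod_scaled_pow, <- Rmult_assoc.
  apply Rmult_le_compat_r; [apply pow_le, rho_bounds|].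
  apply Rmult_le_compat_r; [apply Cmod_ge_0 | apply HB].
Qed.

Lemma qpoch_inf_correct (y : C) : converges_to (qpoch y q) (qpoch_inf y q).
Proof.
  destruct (qpoch_converges y) as [L HL]. unfold qpoch_inf.
  rewrite (seq_lim_correct _ _ HL). exact HL.
Qed.

Lemma qpoch_inf_nz (y : C) : nonvanishing q y -> qpoch_inf y q <> 0.
Proof.
  intros Hy. destruct (qpoch_lower_bound y Hy) as [d [Hd Hn]].
  apply Cmod_gt_0. eapply Rlt_le_trans; [exact Hd|].
  exact (converges_to_norm_lower _ _ d (qpoch_inf_correct y) Hn).
Qed.

Lemma qpoch_inf_shift (y : C) (n : nat) : nonvanishing q y ->
  qpoch_inf (y * q ^ n) q = qpoch_inf y q / qpoch y q n.
Proof.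
  intros Hy. pose proof (qpoch_nz y q n Hy) as Hn.
  unfold qpoch_inf at 1. apply seq_lim_correct.
  apply (converges_to_ext (fun m => / qpoch y q n * qpoch y q (n + m)));
    [intros m; rewrite qpoch_split; field; exact Hn|].
  unfold Cdiv. rewrite Cmult_comm. apply converges_to_scal.
  apply converges_to_shift, qpoch_inf_correct.
Qed.

Lemma qpoch_inf_step (y : C) : nonvanishing q y -> qpoch_inf y q = (1 - y) * qpoch_inf (y * q) q.
Proof.
  intros Hy. rewrite <- (Cpow_1_r q) at 2. rewrite qpoch_inf_shift by exact Hy.
  pose proof (qpoch_nz y q 1 Hy) as Hn. simpl in *. field.
  replace (1 * (1 - y * 1)) with (1 - y) in Hn by ring. exact Hn.
Qed.

Lemma qpochs_nz (l : list C) (n : nat) : List.Forall (nonvanishing q) l -> qpochs l q n <> 0.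
Proof.
  induction 1; rewrite ?qpochs_cons; [exact C1_nz | apply Cmult_neq_0; auto using qpoch_nz].
Qed.

Lemma qpochs_inf_nz (l : list C) : List.Forall (nonvanishing q) l -> qpochs_inf l q <> 0.
Proof.
  induction 1; rewrite ?qpochs_inf_cons; [exact C1_nz | apply Cmult_neq_0; auto using qpoch_inf_nz].
Qed.

Lemma qpochs_upper_bound (l : list C) : exists B, forall n, (Cmod (qpochs l q n) <= B)%R.
Proof.
  induction l as [|x l [B HB]].
  - exists 1%R. intros n. rewrite qpochs_nil, Cmod_1. lra.
  - destruct (qpoch_upper_bound x) as [Bx HBx].
    exists (Bx * B)%R. intros n. rewrite qpochs_cons, Cmod_mult.
    apply Rmult_le_compat; auto using Cmod_ge_0.
Qed.

Lemma qpochs_lower_bound (l : list C) : List.Forall (nonvanishing q) l ->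
  exists d, (0 < d)%R /\ forall n, (d <= Cmod (qpochs l q n))%R.
Proof.
  induction 1 as [|x l Hx _ [d [Hd Hn]]].
  - exists 1%R. split; [lra|]. intros n. rewrite qpochs_nil, Cmod_1. lra.
  - destruct (qpoch_lower_bound x Hx) as [dx [Hdx Hnx]].
    exists (dx * d)%R. split; [apply Rmult_lt_0_compat; auto|].
    intros n. rewrite qpochs_cons, Cmod_mult. apply Rmult_le_compat; auto; lra.
Qed.

Lemma qpochs_inf_shift (l : list C) (n : nat) : List.Forall (nonvanishing q) l ->
  qpochs_inf (map (fun y => y * q ^ n) l) q = qpochs_inf l q / qpochs l q n.
Proof.
  induction 1 as [|x l Hx Hl IH]; simpl map.
  - rewrite qpochs_inf_nil, qpochs_nil. field.
  - rewrite !qpochs_inf_cons, qpochs_cons, IH, qpoch_inf_shift by exact Hx.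
    field. split; [apply qpochs_nz | apply qpoch_nz]; assumption.
Qed.

(* the series  sum_n (Dc;q)_n / (D;q)_n q^n  converges: its terms are O(|q|^n) *)
Lemma qratio_series_converges (D Dc : list C) : List.Forall (nonvanishing q) D ->
  exists l, converges_to (psum (fun n => qpochs Dc q n / qpochs D q n * q ^ n)) l.
Proof.
  intros HD.
  destruct (qpochs_upper_bound Dc) as [B HB].
  destruct (qpochs_lower_bound D HD) as [d [Hd Hn]].
  apply (psum_converges_geometric _ (B / d) rho rho_bounds).
  intros n. pose proof (qpochs_nz D n HD) as Hnz.
  unfold Cdiv. rewrite !Cmod_mult, Cmod_inv, Cmod_pow by exact Hnz.
  apply Rmult_le_compat_r; [apply pow_le, rho_bounds|].
  apply Rmult_le_compat; auto using Cmod_ge_0.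
  - left. apply Rinv_0_lt_compat, Cmod_gt_0, Hnz.
  - apply Rinv_le_contravar; auto.
Qed.

End QPochhammer.

Definition jackson_integrand (top bot : list C) (s q u : C) : C :=
  qpochs_inf (map (fun x => x * (u / s)) top) q / qpochs_inf (map (fun x => x * (u / s)) bot) q.

(* at the point u = q^n s t the integrand is (D q^n; q)_oo / (Dc q^n; q)_oo with
   D = t top, Dc = t bot, so the Jackson sum toward the endpoint s t is
   (D;q)_oo/(Dc;q)_oo times the series sum_n (Dc;q)_n/(D;q)_n q^n *)
Lemma jackson_endpoint_sum (q s t : C) (top bot D Dc : list C) :
  (Cmod q < 1)%R -> s <> 0 ->
  map (fun x => x * t) top = D -> map (fun x => x * t) bot = Dc ->
  List.Forall (nonvanishing q) D -> List.Forall (nonvanishing q) Dc ->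
  series (fun n => q ^ n * jackson_integrand top bot s q (q ^ n * (s * t)))
  = qpochs_inf D q / qpochs_inf Dc q * series (fun n => qpochs Dc q n / qpochs D q n * q ^ n).
Proof.
  intros Hq Hs <- <- HD HDc.
  destruct (qratio_series_converges q Hq (map (fun x => x * t) top) (map (fun x => x * t) bot) HD)
    as [l Hl].
  rewrite <- (series_scal _ _ _ Hl). apply series_ext. intros n.
  assert (Hpoint : forall l0 : list C,
    map (fun x => x * (q ^ n * (s * t) / s)) l0
    = map (fun y => y * q ^ n) (map (fun x => x * t) l0)).
  { intros l0. rewrite map_map. apply map_ext. intros x. field. exact Hs. }
  unfold jackson_integrand. rewrite !Hpoint, !qpochs_inf_shift by assumption.
  pose proof (qpochs_nz q _ n HD). pose proof (qpochs_nz q _ n HDc).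
  pose proof (qpochs_inf_nz q Hq _ HDc).
  field. auto.
Qed.

(* the d1-half of H written as an explicit q-series; the superscript
   C-A-2 exactly cancels the balancing factor ((-1)^k q^(k choose 2))^(...) *)
Definition H_series (a c : list C) (d1 d2 q : C) : C :=
  series (fun n => qpochs (map (fun x => d1 * x) c) q n
                   / qpochs (q * d1 / d2 :: q :: map (fun x => d1 * x) a) q n * q ^ n).

Lemma H_term_as_series (a c : list C) (d1 d2 q : C) :
  nonvanishing q q -> nonvanishing q (q * d1 / d2) ->
  List.Forall (nonvanishing q) (map (fun x => d1 * x) a) ->
  H_term a c d1 d2 q =
  qpochs_inf (map (fun x => d1 * x) a) q
  / (qpoch_inf (d2 / d1) q * qpochs_inf (map (fun x => d1 * x) c) q) * H_series a c d1 d2 q.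
Proof.
  intros Hqq Hqd Ha. unfold H_term, phi_gen, H_series. f_equal.
  rewrite length_app, !length_map. simpl length.
  replace (Z.of_nat (length a + 1) - Z.of_nat (length c) + 1
           + (Z.of_nat (length c) - Z.of_nat (length a) - 2))%Z with 0%Z by lia.
  apply series_ext. intros n. simpl zpow.
  rewrite qpochs_app, !qpochs_cons, qpochs_nil.
  pose proof (qpoch_nz _ _ n Hqq). pose proof (qpoch_nz _ _ n Hqd). pose proof (qpochs_nz q _ n Ha).
  field. repeat split; assumption.
Qed.

Lemma RHS_as_jackson (a c : list C) (d1 d2 r s q : C) :
  RHS a c d1 d2 r s q =
  / r / ((1 - q) * s * qpoch_inf q q * qtheta (d2 / d1) q)
  * jackson q (jackson_integrand ((q * r :: q * / r :: nil) ++ map (fun x => x * (d1 * / r)) a)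
                                 (map (fun x => x * (d1 * / r)) c) s q)
            (s * / r) (s * r).
Proof.
  unfold RHS. do 2 f_equal. apply functional_extensionality. intros u.
  unfold jackson_integrand. rewrite (map_map _ _ c). reflexivity.
Qed.

Section Endpoints.
Variables (q s r d1 d2 : C) (a c : list C).
Hypotheses (Hq : (Cmod q < 1)%R) (Hs : s <> 0) (Hr0 : r <> 0) (Hd2 : d2 <> 0)
  (Hd1 : d1 = r * r * d2).

Let top : list C := (q * r :: q * / r :: nil) ++ map (fun x => x * (d1 * / r)) a.
Let bot : list C := map (fun x => x * (d1 * / r)) c.

Lemma jackson_upper_sum :
  nonvanishing q (q * d1 / d2) ->
  List.Forall (nonvanishing q) (map (fun x => d1 * x) a) ->
  List.Forall (nonvanishing q) (map (fun x => d1 * x) c) ->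
  series (fun n => q ^ n * jackson_integrand top bot s q (q ^ n * (s * r)))
  = qpochs_inf (q * d1 / d2 :: q :: map (fun x => d1 * x) a) q
    / qpochs_inf (map (fun x => d1 * x) c) q * H_series a c d1 d2 q.
Proof.
  intros Hqd Ha Hc. pose proof (nonvanishing_q q Hq).
  assert (Htop : map (fun x => x * r) top = q * d1 / d2 :: q :: map (fun x => d1 * x) a).
  { unfold top. rewrite map_app, map_map. simpl. f_equal; [rewrite Hd1; field; auto|].
    f_equal; [field; auto|]. apply map_ext. intros x. field. exact Hr0. }
  assert (Hbot : map (fun x => x * r) bot = map (fun x => d1 * x) c).
  { unfold bot. rewrite map_map. apply map_ext. intros x. field. exact Hr0. }
  apply (jackson_endpoint_sum q s r top bot _ _ Hq Hs Htop Hbot);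
    repeat apply Forall_cons; assumption.
Qed.

Lemma jackson_lower_sum :
  nonvanishing q (q * d2 / d1) ->
  List.Forall (nonvanishing q) (map (fun x => d2 * x) a) ->
  List.Forall (nonvanishing q) (map (fun x => d2 * x) c) ->
  series (fun n => q ^ n * jackson_integrand top bot s q (q ^ n * (s * / r)))
  = qpochs_inf (q * d2 / d1 :: q :: map (fun x => d2 * x) a) q
    / qpochs_inf (map (fun x => d2 * x) c) q * H_series a c d2 d1 q.
Proof.
  intros Hqd Ha Hc. pose proof (nonvanishing_q q Hq).
  assert (Htop : map (fun x => x * / r) top = q :: q * d2 / d1 :: map (fun x => d2 * x) a).
  { unfold top. rewrite map_app, map_map. simpl. f_equal; [field; auto|].
    f_equal; [rewrite Hd1; field; auto|]. apply map_ext. intros x. rewrite Hd1. field. exact Hr0. }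
  assert (Hbot : map (fun x => x * / r) bot = map (fun x => d2 * x) c).
  { unfold bot. rewrite map_map. apply map_ext. intros x. rewrite Hd1. field. exact Hr0. }
  rewrite (jackson_endpoint_sum q s (/ r) top bot _ _ Hq Hs Htop Hbot)
    by (repeat apply Forall_cons; assumption).
  (* the endpoint lists q before q d2/d1; reorder the commuting factors *)
  rewrite !qpochs_inf_cons. unfold H_series.
  rewrite (series_ext _ (fun n => qpochs (map (fun x => d2 * x) c) q n
                   / qpochs (q * d2 / d1 :: q :: map (fun x => d2 * x) a) q n * q ^ n))
    by (intros n; do 2 f_equal; rewrite !qpochs_cons; ring).
  do 2 f_equal. ring.
Qed.

(* combining both endpoints with theta(d2/d1) = (1 - d2/d1)(q d2/d1, q d1/d2; q)_oo
   yields the two halves of H *)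
Lemma RHS_as_H_terms :
  nonvanishing q (d2 / d1) -> nonvanishing q (d1 / d2) ->
  nonvanishing q (q * d1 / d2) -> nonvanishing q (q * d2 / d1) ->
  List.Forall (nonvanishing q) (map (fun x => d1 * x) a) ->
  List.Forall (nonvanishing q) (map (fun x => d2 * x) a) ->
  List.Forall (nonvanishing q) (map (fun x => d1 * x) c) ->
  List.Forall (nonvanishing q) (map (fun x => d2 * x) c) ->
  RHS a c d1 d2 r s q =
  qpochs_inf (map (fun x => d1 * x) a) q
  / (qpoch_inf (d2 / d1) q * qpochs_inf (map (fun x => d1 * x) c) q) * H_series a c d1 d2 q
  + qpochs_inf (map (fun x => d2 * x) a) q
  / (qpoch_inf (d1 / d2) q * qpochs_inf (map (fun x => d2 * x) c) q) * H_series a c d2 d1 q.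
Proof.
  intros N21 N12 Nq12 Nq21 A1 A2 C1 C2.
  assert (Hd1nz : d1 <> 0) by (rewrite Hd1; repeat apply Cmult_neq_0; assumption).
  rewrite RHS_as_jackson. unfold jackson. fold top bot.
  rewrite jackson_upper_sum, jackson_lower_sum by assumption.
  replace (s * / r) with (s * r * (d2 / d1)) by (rewrite Hd1; field; auto).
  unfold qtheta. replace (q / (d2 / d1)) with (q * d1 / d2) by (field; auto).
  rewrite (qpoch_inf_step q Hq (d2 / d1)), (qpoch_inf_step q Hq (d1 / d2)) by assumption.
  replace (d2 / d1 * q) with (q * d2 / d1) by (field; auto).
  replace (d1 / d2 * q) with (q * d1 / d2) by (field; auto).
  rewrite !qpochs_inf_cons.
  pose proof (nonvanishing_q q Hq) as Nq.
  pose proof (qpoch_inf_nz q Hq q Nq) as Pq.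
  pose proof (qpoch_inf_nz q Hq _ Nq12) as P12. pose proof (qpoch_inf_nz q Hq _ Nq21) as P21.
  pose proof (qpochs_inf_nz q Hq _ C1) as PC1. pose proof (qpochs_inf_nz q Hq _ C2) as PC2.
  assert (Hq1 : 1 - q <> 0)
    by (pose proof (Nq 0%nat) as K; simpl in K; rewrite Cmult_1_r in K; exact K).
  assert (Hdiff : d1 - d2 <> 0).
  { intros E. apply (N21 0%nat). replace d1 with d2 by (rewrite <- (Cplus_0_r d2), <- E; ring).
    field. exact Hd2. }
  assert (Hdiff' : d2 - d1 <> 0) by (intros E; apply Hdiff; rewrite <- Copp_minus_distr, E; ring).
  field. repeat split; assumption.
Qed.

End Endpoints.

Lemma zpow_neg_nat (q : C) (m : nat) : zpow q (- Z.of_nat m) = / q ^ m.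
Proof. destruct m as [|m]; simpl; [field | rewrite SuccNat2Pos.id_succ; reflexivity]. Qed.

Lemma zpow_opp (q : C) (m : Z) : q <> 0 -> zpow q (- m) = / zpow q m.
Proof.
  intros Hq. destruct m as [|p|p]; simpl; [field | reflexivity |].
  field. apply Cpow_nz, Hq.
Qed.

Lemma nonvanishing_of_not_in_Omega (q y : C) : q <> 0 -> ~ in_Omega q y -> nonvanishing q y.
Proof.
  intros Hq Hy m E. apply Hy. exists m. pose proof (Cpow_nz q m Hq).
  replace y with ((1 - (1 - y * q ^ m)) / q ^ m) by (field; assumption).
  rewrite E. field. assumption.
Qed.

Lemma not_power_nonvanishing (q x : C) : q <> 0 -> (forall m : Z, x <> zpow q m) ->
  nonvanishing q x /\ nonvanishing q (q * x).
Proof.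
  intros Hq Hx. split; apply nonvanishing_of_not_in_Omega; auto; intros [k Hk].
  - apply (Hx (- Z.of_nat k)%Z). rewrite zpow_neg_nat. exact Hk.
  - apply (Hx (- Z.of_nat (S k))%Z). rewrite zpow_neg_nat. simpl.
    replace x with ((q * x) / q) by (field; assumption). rewrite Hk. field.
    split; [apply Cpow_nz|]; assumption.
Qed.

Lemma swapped_ratio_not_power (q d1 d2 : C) : q <> 0 -> d1 <> 0 -> d2 <> 0 ->
  (forall m : Z, d2 / d1 <> zpow q m) -> forall m : Z, d1 / d2 <> zpow q m.
Proof.
  intros Hq Hd1 Hd2 Hratio m E. apply (Hratio (- m)%Z).
  rewrite zpow_opp, <- E by assumption. field. auto.
Qed.

Lemma sqrt_ratio_nz (d1 d2 r : C) : d1 <> 0 -> d2 <> 0 -> r * r = d1 / d2 -> r <> 0.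
Proof.
  intros Hd1 Hd2 Hr E. apply Hd1.
  replace d1 with (r * r * d2) by (rewrite Hr; field; exact Hd2). rewrite E. ring.
Qed.

Lemma nonvanishing_scaled (q d : C) (l : list C) : q <> 0 ->
  (forall x, In x l -> ~ in_Omega q (d * x)) ->
  List.Forall (nonvanishing q) (map (fun x => d * x) l).
Proof.
  intros Hq Hl. apply Forall_map, Forall_forall. intros x Hx.
  apply nonvanishing_of_not_in_Omega; auto.
Qed.

Lemma H_eq_RHS (q : C) (a c : list C) (d1 d2 s r : C) :
  q <> 0 -> (Cmod q < 1)%R ->
  d1 <> 0 -> d2 <> 0 ->
  (forall m : Z, d2 / d1 <> zpow q m) ->
  (forall x, In x c -> ~ in_Omega q (d1 * x) /\ ~ in_Omega q (d2 * x)) ->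
  (forall x, In x a -> ~ in_Omega q (d1 * x) /\ ~ in_Omega q (d2 * x)) ->
  s <> 0 ->
  r * r = d1 / d2 ->
  H a c d1 d2 q = RHS a c d1 d2 r s q.
Proof.
  intros Hq0 Hq Hd1 Hd2 Hratio Hc Ha Hs Hr.
  assert (Hd1e : d1 = r * r * d2) by (rewrite Hr; field; assumption).
  pose proof (sqrt_ratio_nz d1 d2 r Hd1 Hd2 Hr) as Hr0.
  destruct (not_power_nonvanishing q (d2 / d1) Hq0 Hratio) as [N21 Nq21].
  pose proof (swapped_ratio_not_power q d1 d2 Hq0 Hd1 Hd2 Hratio) as Hratio'.
  destruct (not_power_nonvanishing q (d1 / d2) Hq0 Hratio') as [N12 Nq12].
  replace (q * (d2 / d1)) with (q * d2 / d1) in Nq21 by (field; auto).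
  replace (q * (d1 / d2)) with (q * d1 / d2) in Nq12 by (field; auto).
  assert (A1 := nonvanishing_scaled q d1 a Hq0 (fun x Hx => proj1 (Ha x Hx))).
  assert (A2 := nonvanishing_scaled q d2 a Hq0 (fun x Hx => proj2 (Ha x Hx))).
  assert (C1 := nonvanishing_scaled q d1 c Hq0 (fun x Hx => proj1 (Hc x Hx))).
  assert (C2 := nonvanishing_scaled q d2 c Hq0 (fun x Hx => proj2 (Hc x Hx))).
  pose proof (nonvanishing_q q Hq) as Nq.
  unfold H. rewrite (H_term_as_series a c d1 d2), (H_term_as_series a c d2 d1) by assumption.
  symmetry. apply RHS_as_H_terms; assumption.
Qed.

Theorem theorem2p4 (q : C) (a c : list C) (d1 d2 s r : C) :
  q <> 0 -> (Cmod q < 1)%R ->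
  d1 <> 0 -> d2 <> 0 ->
  (forall m : Z, d2 / d1 <> zpow q m) ->
  (forall x, In x c -> ~ in_Omega q (d1 * x) /\ ~ in_Omega q (d2 * x)) ->
  (forall x, In x a -> ~ in_Omega q (d1 * x) /\ ~ in_Omega q (d2 * x)) ->
  s <> 0 ->
  r * r = d1 / d2 ->
  H a c d1 d2 q = RHS a c d1 d2 r s q /\
  RHS a c d2 d1 (/ r) s q = RHS a c d1 d2 r s q.
Proof.
  intros Hq0 Hq Hd1 Hd2 Hratio Hc Ha Hs Hr.
  pose proof (sqrt_ratio_nz d1 d2 r Hd1 Hd2 Hr) as Hr0.
  assert (Hmain : H a c d1 d2 q = RHS a c d1 d2 r s q) by (apply H_eq_RHS; assumption).
  assert (Hswap : H a c d2 d1 q = RHS a c d2 d1 (/ r) s q).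
  { apply H_eq_RHS; try assumption.
    - apply swapped_ratio_not_power; assumption.
    - intros x Hx. apply and_comm, Hc, Hx.
    - intros x Hx. apply and_comm, Ha, Hx.
    - replace (/ r * / r) with (/ (r * r)) by (field; exact Hr0).
      rewrite Hr. field. split; assumption. }
  split; [exact Hmain|].
  rewrite <- Hswap, <- Hmain. unfold H. apply Cplus_comm.
Qed.
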